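(* Let $\mathcal P=(S_1,\dots,S_n)$ be a partition of $V(G)$ into sets of size $r$ and $T=T_{\vec B,\mathcal P}$. For every $j\in\{1,\dots,n\}$ and $v\in S_j$, with $\xi_v=\sigma_T(v)f_v(T\cap\mathcal N(v))$, $$\big|\mathbb E\big[\xi_v\mid B_1,\dots,B_{j-1},B_{j+1},\dots,B_n\big]\big|\le\frac{pq}{r(r-1)}\sum_{w\in S_j\setminus\{v\}}W_v(w).$$
   Context: Let $n,p,q$ be positive integers, $r=p+q$, $G$ a finite simple graph with $|V(G)|=rn$; $\mathcal N(v)$ neighbor set. For each $v$, $f_v:2^{\mathcal N(v)}\to\mathbb R$ with $f_v(\emptyset)=0$. $\sigma_T(v)=q$ if $v\in T$, $-p$ otherwise. Weight of $w$ on $v$: $W_v(w)=\sup_{A\subseteq\mathcal N(v)\setminus\{w\}}|f_v(A)-f_v(A\cup\{w\})|$ if $w\in\mathcal N(v)$, and $0$ otherwise. Restricted randomization: $S_i=\{w_i^1,\dots,w_i^r\}$, $B_1,\dots,B_n$ i.i.d. uniform $p$-subsets of $\{1,\dots,r\}$, $T_{\vec B,\mathcal P}=\{w_i^j:j\in B_i\}$. *)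

From HB Require Import structures.
From mathcomp Require Import all_boot all_order all_algebra.
Set Implicit Arguments. Unset Strict Implicit. Unset Printing Implicit Defensive.
Import Order.TTheory GRing.Theory Num.Theory.
Local Open Scope ring_scope.

Section Defs.
Variables (R : realFieldType) (V : finType).

Definition nbhd (e : rel V) (v : V) : {set V} := [set w | e v w].

(* weight W_v(w): the sup over A ⊆ N(v)\{w} (a finite max of nonnegatives) *)
Definition weight (e : rel V) (f : V -> {set V} -> R) (v w : V) : R :=
  if w \in nbhd e v then
    \big[Num.max/0]_(A : {set V} | A \subset nbhd e v :\ w)
        `|f v A - f v (w |: A)|
  else 0.

Definition sigma (p q : nat) (T : {set V}) (v : V) : R :=
  if v \in T then q%:R else - p%:R.

(* T_{B,P} = { w_i^k : k in B_i }, with P i k = w_i^k *)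
Definition T_of (n r : nat) (P : 'I_n -> 'I_r -> V) (B : 'I_n -> {set 'I_r})
  : {set V} :=
  [set x | [exists i : 'I_n, exists k : 'I_r, (k \in B i) && (x == P i k)]].

Definition xi (p q : nat) (e : rel V) (f : V -> {set V} -> R) (T : {set V})
  (v : V) : R := sigma p q T v * f v (T :&: nbhd e v).

Definition upd (n r : nat) (B : 'I_n -> {set 'I_r}) (j : 'I_n) (X : {set 'I_r})
  : 'I_n -> {set 'I_r} := fun i => if i == j then X else B i.

(* E[xi_v | B_i, i <> j]: average over the uniform p-subset B_j *)
Definition condE (p q n : nat) (e : rel V) (f : V -> {set V} -> R)
  (P : 'I_n -> 'I_(p + q) -> V) (B : 'I_n -> {set 'I_(p + q)}) (j : 'I_n)
  (v : V) : R :=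
  (\sum_(X : {set 'I_(p + q)} | #|X| == p)
      xi p q e f (T_of P (upd B j X)) v) / ('C(p + q, p))%:R.
End Defs.

From HB Require Import structures.
From mathcomp Require Import all_boot all_order all_algebra.
From mathcomp Require Import ring zify.
Import Order.TTheory GRing.Theory Num.Theory.
Local Open Scope ring_scope.

(* Fix [v = w_j^k] and let [h X] be [f_v (T :&: N(v))] when [B_j = X]; the
   conditional expectation is the average over the [p]-sets [X] of
   [sigma h X], with [sigma = q] if [k \in X] and [-p] otherwise.  Summing
   [h (k |: Y) - h (w |: Y)] over [w != k] and the [(p-1)]-sets [Y] avoiding
   [k] and [w] counts each [X] containing [k] exactly [q] times and each [X]
   avoiding [k] exactly [p] times, with opposite signs, so it reproduces that
   sum.  As [v] is not its own neighbour, [h (k |: Y) = h Y], hence each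
   difference is at most [W_v(w_j^w)]; there are [C(r-2, p-1)] sets [Y] per
   [w], and [C(r-2, p-1) / C(r, p) = pq / (r(r-1))]. *)

Lemma exchange_big_count (R : nmodType) (I : finType) (c : pred I)
    (P : pred {set I}) (Q : {set I} -> I -> bool) (g : {set I} -> R) :
  \sum_(w | c w) \sum_(X | P X && Q X w) g X
  = \sum_(X | P X) g X *+ #|[set w | c w && Q X w]|.
Proof.
rewrite (exchange_big_dep P) /=; last by move=> w X _ /andP[].
apply: eq_bigr => X PX; rewrite -sumr_const; apply: eq_bigl => w.
by rewrite inE PX.
Qed.

Lemma mul_bin_pred2 p q : (0 < p)%N -> (0 < q)%N ->
  ('C((p + q).-2, p.-1) * ((p + q) * (p + q).-1) = 'C(p + q, p) * (p * q))%N.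
Proof.
case: p => // p; case: q => // q _ _; rewrite !addSn addnS /=.
have diag := mul_bin_diag (p + q).+2 p.
have down := mul_bin_down (p + q).+1 p.
rewrite /= subSn ?leq_addr // addKn in diag down.
transitivity ((p + q).+2 * ((p + q).+1 * 'C(p + q, p)))%N; first by ring.
by rewrite down mulnCA diag; ring.
Qed.

Lemma bin_pred2_ratio (R : numFieldType) p q : (0 < p)%N -> (0 < q)%N ->
  (p * q)%:R / ((p + q) * (p + q).-1)%:R * ('C(p + q, p))%:R
  = ('C((p + q).-2, p.-1))%:R :> R.
Proof.
move=> p_gt0 q_gt0.
have denom_neq0 : ((p + q) * (p + q).-1)%:R != 0 :> R.
  by rewrite pnatr_eq0 muln_eq0; lia.
apply: (mulIf denom_neq0); rewrite mulrAC (divfK denom_neq0) -!natrM.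
by rewrite mulnC -mul_bin_pred2.
Qed.

Section SignedSum.
Variables (R : numDomainType) (I : finType) (p q : nat).
Hypotheses (p_gt0 : (0 < p)%N) (card_I : #|I| = (p + q)%N).
Variables (g : {set I} -> R) (k : I).

Definition draws_avoiding (a b : I) (m : nat) : {set {set I}} :=
  [set Y : {set I} | (Y \subset ~: [set a; b]) && (#|Y| == m)].

Lemma card_draws_avoiding w m : w != k ->
  #|draws_avoiding k w m| = 'C((p + q).-2, m).
Proof.
move=> wk; rewrite cards_draws; congr 'C(_, _).
have := cardsC [set k; w]; rewrite cards2 (eq_sym k) wk card_I /=.
lia.
Qed.

Lemma sum_draws_avoiding_setU1 (a b : I) m : a != b ->
  \sum_(Y in draws_avoiding a b m) g (a |: Y)
  = \sum_(X : {set I} | (#|X| == m.+1) && (a \in X) && (b \notin X)) g X.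
Proof.
move=> ab; have notin_a Y : Y \in draws_avoiding a b m -> a \notin Y.
  by rewrite inE => /andP[sY _]; apply/negP => /(subsetP sY); rewrite !inE eqxx.
rewrite -big_imset; last first.
  by move=> Y1 Y2 /notin_a aY1 /notin_a aY2 E; rewrite -(setU1K aY1) E setU1K.
apply: eq_bigl => X; apply/imsetP/idP.
- case=> Y DY ->; have aY := notin_a _ DY; move: DY; rewrite inE.
  case/andP=> sY /eqP cY.
  have bY : b \notin Y by apply/negP => /(subsetP sY); rewrite !inE eqxx orbT.
  rewrite cardsU1 aY cY setU11 !in_setU1 (negbTE bY) orbF (eq_sym b) ab.
  by rewrite eqxx.
- case/andP=> /andP[/eqP cX aX] bX; exists (X :\ a); last by rewrite setD1K.
  rewrite inE; apply/andP; split.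
    apply/subsetP => x; rewrite !inE => /andP[xa xX]; rewrite negb_or xa /=.
    by apply: contraNneq bX => <-.
  by rewrite (cardsD1 a) aX add1n in cX; case: cX => ->.
Qed.

Lemma signed_sum_draws :
  \sum_(X : {set I} | #|X| == p) (if k \in X then q%:R else - p%:R) * g X
  = \sum_(w | w != k)
      \sum_(Y in draws_avoiding k w p.-1) (g (k |: Y) - g (w |: Y)).
Proof.
have with_k w : w != k -> \sum_(Y in draws_avoiding k w p.-1) g (k |: Y)
    = \sum_(X : {set I} | (#|X| == p) && (k \in X) && (w \notin X)) g X.
  by move=> wk; rewrite sum_draws_avoiding_setU1 ?prednK // eq_sym.
have with_w w : w != k -> \sum_(Y in draws_avoiding k w p.-1) g (w |: Y)
    = \sum_(X : {set I} | (#|X| == p) && (k \notin X) && (w \in X)) g X.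
  move=> wk; rewrite /draws_avoiding setUC sum_draws_avoiding_setU1 //.
  by apply: eq_bigl => X; rewrite prednK // andbAC.
under [RHS]eq_bigr => w wk do rewrite sumrB with_k // with_w //.
rewrite sumrB (exchange_big_count _ _ _ (fun X => (#|X| == p) && (k \in X))
                 (fun X w => w \notin X)).
rewrite (exchange_big_count _ _ _ (fun X => (#|X| == p) && (k \notin X))
           (fun X w => w \in X)).
rewrite (bigID (fun X : {set I} => k \in X)) -sumrN /=; congr (_ + _).
- apply: eq_bigr => X /andP[/eqP cX kX]; rewrite kX mulr_natl.
  have -> : [set w | (w != k) && (w \notin X)] = ~: X.
    by apply/setP => w; rewrite !inE; case: eqVneq => [->|//]; rewrite kX.
  by have := cardsC X; rewrite cX card_I => /addnI ->.
- apply: eq_bigr => X /andP[/eqP cX /negbTE kX]; rewrite kX mulNr mulr_natl.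
  have -> : [set w | (w != k) && (w \in X)] = X.
    by apply/setP => w; rewrite !inE; case: eqVneq => [->|//]; rewrite kX.
  by rewrite cX.
Qed.

Lemma norm_signed_sum_draws_le (c : I -> R) :
  (forall w (Y : {set I}), w != k -> k \notin Y -> w \notin Y ->
     `|g (k |: Y) - g (w |: Y)| <= c w) ->
  `|\sum_(X : {set I} | #|X| == p) (if k \in X then q%:R else - p%:R) * g X|
    <= 'C((p + q).-2, p.-1)%:R * \sum_(w | w != k) c w.
Proof.
move=> diff_le; rewrite signed_sum_draws mulr_sumr.
apply: le_trans (ler_norm_sum _ _ _) _; apply: ler_sum => w wk.
apply: le_trans (ler_norm_sum _ _ _) _.
rewrite -(card_draws_avoiding _ p.-1 wk) -sum1_card natr_sum mulr_suml.
apply: ler_sum => Y; rewrite inE mul1r => /andP[sY _].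
by apply: diff_le => //; apply/negP => /(subsetP sY); rewrite !inE eqxx ?orbT.
Qed.

End SignedSum.

Section Randomization.
Variables (V : finType) (n r : nat) (P : 'I_n -> 'I_r -> V).

Lemma T_of_upd_setU1 B j a Y :
  T_of P (upd B j (a |: Y)) = P j a |: T_of P (upd B j Y).
Proof.
apply/setP => x; rewrite /T_of /upd !inE; apply/existsP/orP.
- case=> i /existsP [k /andP[+ /eqP ->]]; case: (eqVneq i j) => [-> | ne] kB.
    case/setU1P: kB => [-> | kY]; first by left; apply/eqP.
    by right; apply/existsP; exists j; apply/existsP; exists k; rewrite !eqxx kY.
  right; apply/existsP; exists i; apply/existsP; exists k.
  by rewrite (negbTE ne) kB eqxx.
- case=> [/eqP -> | /existsP [i /existsP [k /andP[kB /eqP ->]]]].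
    by exists j; apply/existsP; exists a; rewrite !eqxx setU11.
  exists i; apply/existsP; exists k; rewrite (eqxx (P i k)) andbT.
  by case: eqP kB => // _ /setU1r.
Qed.

Lemma mem_T_of_upd (hP : injective (fun x : 'I_n * 'I_r => P x.1 x.2)) B j a Y :
  (P j a \in T_of P (upd B j Y)) = (a \in Y).
Proof.
rewrite /T_of /upd inE; apply/existsP/idP => [[i /existsP [k]] | aY].
  by case/andP=> kB /eqP/(hP (j, a) (i, k)) [ji ak]; move: kB; rewrite -ji -ak eqxx.
by exists j; apply/existsP; exists a; rewrite eqxx aY eqxx.
Qed.

End Randomization.

Section Weight.
Variables (R : realFieldType) (V : finType) (e : rel V).
Variables (f : V -> {set V} -> R) (v : V).

Lemma setIU1_nbhd_self (T : {set V}) : irreflexive e ->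
  (v |: T) :&: nbhd e v = T :&: nbhd e v.
Proof.
move=> e_irr; apply/setP => x; rewrite !in_setI in_setU1 /nbhd inE.
by case: eqVneq => [->|] //=; rewrite e_irr andbF.
Qed.

Lemma weight_ge_diff_setU1 x (T : {set V}) : x \notin T ->
  `|f v (T :&: nbhd e v) - f v ((x |: T) :&: nbhd e v)| <= weight e f v x.
Proof.
move=> xT; rewrite /weight; case: ifPn => xN.
  have -> : (x |: T) :&: nbhd e v = x |: (T :&: nbhd e v).
    by apply/setP => y; rewrite in_setU1 !in_setI in_setU1; case: eqVneq => [->|].
  rewrite (bigD1 (T :&: nbhd e v)) /= ?le_max ?lexx //.
  apply/subsetP => y; rewrite in_setI in_setD1 => /andP[yT ->].
  by rewrite andbT; apply: contraNneq xT => <-.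
have -> : (x |: T) :&: nbhd e v = T :&: nbhd e v.
  by apply/setP => y; rewrite !in_setI !in_setU1; case: eqVneq => [->|] //=;
     rewrite (negbTE xT) (negbTE xN).
by rewrite subrr normr0.
Qed.

End Weight.

Theorem mainTheorem15 (R : realFieldType) (n p q : nat)
  (V : finType) (e : rel V)
  (hn : (0 < n)%N) (hp : (0 < p)%N) (hq : (0 < q)%N)
  (e_sym : symmetric e) (e_irr : irreflexive e)
  (hV : #|V| = ((p + q) * n)%N)
  (f : V -> {set V} -> R) (hf0 : forall v, f v set0 = 0)
  (P : 'I_n -> 'I_(p + q) -> V)
  (hP : injective (fun x : 'I_n * 'I_(p + q) => P x.1 x.2))
  (j : 'I_n) (k : 'I_(p + q))
  (B : 'I_n -> {set 'I_(p + q)})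
  (hB : forall i, i != j -> #|B i| = p) :
  `|condE e f P B j (P j k)|
    <= ((p * q)%:R / ((p + q) * (p + q).-1)%:R)
       * \sum_(k' : 'I_(p + q) | k' != k) weight e f (P j k) (P j k').
Proof.
(* Only block [j] is averaged. *)
set v := P j k; pose h X := f v (T_of P (upd B j X) :&: nbhd e v).
have xiE X : xi p q e f (T_of P (upd B j X)) v
             = (if k \in X then q%:R else - p%:R) * h X.
  by rewrite /xi /sigma mem_T_of_upd.
have diff_le w (Y : {set 'I_(p + q)}) : w != k -> k \notin Y -> w \notin Y ->
    `|h (k |: Y) - h (w |: Y)| <= weight e f v (P j w).
  move=> _ _ wY; rewrite /h !T_of_upd_setU1 setIU1_nbhd_self //.
  by apply: weight_ge_diff_setU1; rewrite mem_T_of_upd.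
rewrite /condE (eq_bigr _ (fun X _ => xiE X)) normrM normfV normr_nat.
rewrite ler_pdivrMr ?ltr0n ?bin_gt0 ?leq_addr // mulrAC bin_pred2_ratio //.
exact: (@norm_signed_sum_draws_le _ _ _ _ hp (card_ord _) _ _ _ diff_le).
Qed.
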